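(* Let $S\le T_n$ be a transformation monoid and $G$ the normalizer of $S$ in $S_n$. Then $SG$ is regular if and only if $S$ is regular.
   Context: A transformation monoid is a subsemigroup of $T_n$ containing the identity map; $G=\{g\in S_n:g^{-1}Sg=S\}$ and $SG=\{sg:s\in S,g\in G\}$, a semigroup. A semigroup $U$ is regular if for every $a\in U$ there exists $a'\in U$ with $a=aa'a$. *)

From mathcomp Require Import all_boot all_fingroup.
Set Implicit Arguments. Unset Strict Implicit. Unset Printing Implicit Defensive.

Definition transf (n : nat) := {ffun 'I_n -> 'I_n}.

(* Composition, written left-to-right as usual for semigroups: (a*b)(x) = b(a(x)). *)
Definition tmul n (a b : transf n) : transf n := [ffun x => b (a x)].
Definition tid n : transf n := [ffun x => x].

Definition perm_tr n (g : {perm 'I_n}) : transf n := [ffun x => g x].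

Definition is_transf_monoid n (S : {set transf n}) : Prop :=
  tid n \in S /\ (forall a b, a \in S -> b \in S -> tmul a b \in S).

Definition conj_set n (S : {set transf n}) (g : {perm 'I_n}) : {set transf n} :=
  [set tmul (tmul (perm_tr g^-1) s) (perm_tr g) | s in S].

Definition normalizerS n (S : {set transf n}) : {set {perm 'I_n}} :=
  [set g : {perm 'I_n} | conj_set S g == S].

Definition SGset n (S : {set transf n}) : {set transf n} :=
  [set tmul s (perm_tr g) | s in S, g in normalizerS S].

Definition regular n (U : {set transf n}) : Prop :=
  forall a, a \in U -> exists2 a', a' \in U & a = tmul (tmul a a') a.

From mathcomp Require Import all_boot all_fingroup.
Set Implicit Arguments. Unset Strict Implicit. Unset Printing Implicit Defensive.

(* If s = s x s with x = t h in SG, then x s lies in the coset S h, so (x s)^k lies in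
   S h^k because G normalizes S. For k = #[h] this lands in S, and since s = s (x s)^k
   for every k, s = s w s with w = (x s)^(k-1) x in S. Conversely, s = s s' s in S gives
   s g = (s g) (g^-1 s') (s g), and g^-1 s' = (g^-1 s' g) g^-1 lies in SG. *)

Local Open Scope group_scope.

Section Transformations.
Variable n : nat.
Implicit Types (a b c : transf n) (g h : {perm 'I_n}).

Lemma tmulA a b c : tmul (tmul a b) c = tmul a (tmul b c).
Proof. by apply/ffunP => x; rewrite !ffunE. Qed.

Lemma tmul_tid a : tmul a (tid n) = a.
Proof. by apply/ffunP => x; rewrite !ffunE. Qed.

Lemma tid_tmul a : tmul (tid n) a = a.
Proof. by apply/ffunP => x; rewrite !ffunE. Qed.

Lemma perm_trM g h : perm_tr (g * h) = tmul (perm_tr g) (perm_tr h).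
Proof. by apply/ffunP => x; rewrite !ffunE permM. Qed.

Lemma perm_tr1 : perm_tr 1 = tid n.
Proof. by apply/ffunP => x; rewrite !ffunE perm1. Qed.

Definition tpow a k := iter k (fun b => tmul b a) (tid n).

Lemma tpowS a k : tpow a k.+1 = tmul (tpow a k) a.
Proof. by []. Qed.

Lemma regular_tpow s x k : tmul (tmul s x) s = s -> tmul s (tpow (tmul x s) k) = s.
Proof.
move=> sxs; elim: k => [|k IHk]; first exact: tmul_tid.
by rewrite tpowS -tmulA IHk -tmulA.
Qed.

Definition conj_tr g a := tmul (tmul (perm_tr g^-1) a) (perm_tr g).

Lemma conj_setE (S : {set transf n}) g : conj_set S g = conj_tr g @: S.
Proof. by []. Qed.

Lemma conj_tr1 a : conj_tr 1 a = a.
Proof. by rewrite /conj_tr invg1 perm_tr1 tmul_tid tid_tmul. Qed.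

Lemma conj_trM g h a : conj_tr (g * h) a = conj_tr h (conj_tr g a).
Proof. by apply/ffunP => x; rewrite !ffunE invMg !permM. Qed.

Lemma perm_tr_conj_tr g a : tmul (perm_tr g) (conj_tr g a) = tmul a (perm_tr g).
Proof. by apply/ffunP => x; rewrite !ffunE permK. Qed.

End Transformations.

Section Normalizer.
Variables (n : nat) (S : {set transf n}).
Implicit Types (u v w : transf n) (g h : {perm 'I_n}).

Lemma normalizerS1 : 1 \in normalizerS S.
Proof. by rewrite inE conj_setE (eq_imset _ (@conj_tr1 n)) imset_id. Qed.

Lemma normalizerS_group_set : group_set (normalizerS S).
Proof.
apply/group_setP; split=> [|g h]; first exact: normalizerS1.
rewrite !inE => /eqP nSg /eqP nSh; apply/eqP.
by rewrite conj_setE (eq_imset _ (conj_trM g h)) imset_comp -[conj_tr g @: S]conj_setE nSg.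
Qed.

Canonical normalizerS_group := group normalizerS_group_set.

Lemma normalizerS_conj g w : g \in normalizerS S -> w \in S -> conj_tr g w \in S.
Proof. by rewrite inE => /eqP nSg Sw; rewrite -nSg conj_setE imset_f. Qed.

Lemma perm_tr_tmul_normalizer g w : g \in normalizerS S -> w \in S ->
  exists2 v, v \in S & tmul (perm_tr g) w = tmul v (perm_tr g).
Proof.
move=> Gg Sw; exists (conj_tr g^-1 w); first by apply: normalizerS_conj; rewrite ?groupV.
by rewrite -perm_tr_conj_tr -conj_trM mulVg conj_tr1.
Qed.

Definition rcoset_tr h := [set tmul w (perm_tr h) | w in S].

Lemma rcoset_tr1 : rcoset_tr 1 = S.
Proof. by rewrite /rcoset_tr; under eq_imset => w do rewrite perm_tr1 tmul_tid; rewrite imset_id. Qed.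

Hypothesis monoidS : is_transf_monoid S.

Lemma rcoset_trM g h u v : g \in normalizerS S ->
  u \in rcoset_tr g -> v \in rcoset_tr h -> tmul u v \in rcoset_tr (g * h).
Proof.
move=> Gg /imsetP [w Sw ->] /imsetP [w' Sw' ->].
have [v' Sv' pushg] := perm_tr_tmul_normalizer Gg Sw'.
apply/imsetP; exists (tmul w v'); first exact: monoidS.2.
by rewrite perm_trM !tmulA -(tmulA (perm_tr g) w') pushg !tmulA.
Qed.

Lemma rcoset_tr_tpow h u k : h \in normalizerS S ->
  u \in rcoset_tr h -> tpow u k \in rcoset_tr (h ^+ k).
Proof.
move=> Gh Hu; elim: k => [|k IHk]; first by rewrite expg0 rcoset_tr1; exact: monoidS.1.
rewrite tpowS expgSr; apply: rcoset_trM => //; exact: groupX.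
Qed.

End Normalizer.

Lemma regular_of_regular_SGset n (S : {set transf n}) :
  is_transf_monoid S -> regular (SGset S) -> regular S.
Proof.
move=> monoidS regSG s Ss.
have SGs : s \in SGset S.
  by rewrite -{1}(tmul_tid s) -(perm_tr1 n); apply: imset2_f; rewrite ?normalizerS1.
have [_ /imset2P [t h St Gh ->] sxs] := regSG s SGs.
have Sh_x : tmul t (perm_tr h) \in rcoset_tr S h by exact: imset_f.
set x := tmul t (perm_tr h) in sxs Sh_x *.
have Sh_xs : tmul x s \in rcoset_tr S h.
  by rewrite -[h]mulg1; apply: rcoset_trM; rewrite ?rcoset_tr1.
have [k ordh] : exists k, #[h] = k.+1 by exists #[h].-1; rewrite prednK ?order_gt0.
exists (tmul (tpow (tmul x s) k) x).
  rewrite -(rcoset_tr1 S) -(expg_order h) ordh expgSr.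
  by apply: rcoset_trM; rewrite ?groupX ?rcoset_tr_tpow.
by rewrite -{1}(regular_tpow k.+1 (esym sxs)) tpowS !tmulA.
Qed.

Lemma regular_SGset n (S : {set transf n}) : regular S -> regular (SGset S).
Proof.
move=> regS _ /imset2P [s g Ss Gg ->].
have [s' Ss' ss's] := regS s Ss.
exists (tmul (conj_tr g s') (perm_tr g^-1)).
  by apply: imset2_f; rewrite ?groupV ?normalizerS_conj.
by rewrite {1}ss's; apply/ffunP => x; rewrite !ffunE !permK.
Qed.

Theorem corollary4p5 (n : nat) (S : {set transf n}) :
  is_transf_monoid S -> (regular (SGset S) <-> regular S).
Proof.
move=> monoidS; split; [exact: regular_of_regular_SGset | exact: regular_SGset].
Qed.
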